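(* Let $d\ge 1$, $G\in\mathrm{GL}_{1+d}(\mathbb{R})$, $\gamma\in\mathbb{R}^{1+d}$, $\mathcal{G}(\tilde X)=G\tilde X+\gamma$, and let $(x_A,\xi_A)\in\mathbb{R}^d\times\mathbb{R}^d$ with $\|\xi_A\|<1$ and $\sigma(\xi_A)\notin G\mathcal{P}_0$. Let $(x_B,\xi_B)=\kappa_{U_{\mathcal{G}}}(x_A,\xi_A)$, where $\kappa_{U_{\mathcal{G}}}(x,\xi)=\big(({}^tdg(\xi))^{-1}(x-dS(\xi)),\ g(\xi)\big)$ with $g(\xi)=\boldsymbol{\pi}({}^tG\sigma(\xi))$ and $S(\xi)=\langle\gamma,\sigma(\xi)\rangle$. Let ${}^t\boldsymbol{\pi}:\mathbb{R}^d\to\mathbb{R}^{1+d}$, ${}^t\boldsymbol{\pi}(x)=(0,x)$, and set $A={}^t\boldsymbol{\pi}x_A$ and $B=\mathcal{G}({}^t\boldsymbol{\pi}x_B)$. Then $B-A$ is collinear to $\sigma(\xi_A)$.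
   Context: $\mathbb{R}^{1+d}$ with canonical basis $e_0,\dots,e_d$, Euclidean scalar product $\langle\cdot,\cdot\rangle$; $\boldsymbol{\pi}:\mathbb{R}^{1+d}\to\mathbb{R}^d$ drops the first coordinate; $\sigma(\xi)=(\sqrt{1-\|\xi\|^2},\xi)$ for $\|\xi\|<1$; $\mathcal{P}_0=\{\xi_0=0\}\subset\mathbb{R}^{1+d}$; ${}^t$ denotes transpose. The map $\kappa_{U_{\mathcal{G}}}$ is the (local) canonical transformation associated with the rotated angular spectrum propagator $U_{\mathcal{G}}$; under the assumption $\sigma(\xi_A)\notin G\mathcal{P}_0$, $dg(\xi_A)$ is invertible. *)

From HB Require Import structures.
From mathcomp Require Import all_boot all_order all_algebra.
From mathcomp Require Import all_classical all_reals all_analysis.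
Set Implicit Arguments. Unset Strict Implicit. Unset Printing Implicit Defensive.
Import Order.TTheory GRing.Theory Num.Theory.
Import numFieldNormedType.Exports.
Local Open Scope ring_scope.

(* Points of R^n are row vectors 'rV[R]_n; a matrix M acting on column
   vectors X (X |-> M X) acts on row vectors as X |-> X *m M^T. *)

Section Defs.
Variable R : realType.

Definition dotv n (u v : 'rV[R]_n) : R := (u *m v^T) 0 0.
Definition enorm n (u : 'rV[R]_n) : R := Num.sqrt (dotv u u).

Definition sigma d (xi : 'rV[R]_d) : 'rV[R]_(1 + d) :=
  row_mx (Num.sqrt (1 - enorm xi ^+ 2))%:M xi.

Definition piproj d (X : 'rV[R]_(1 + d)) : 'rV[R]_d := rsubmx X.
Definition tpi d (x : 'rV[R]_d) : 'rV[R]_(1 + d) := row_mx 0 x.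

Definition P0 d : set 'rV[R]_(1 + d) := [set X | X 0 0 = 0].

Definition Gimage d (G : 'M[R]_(1 + d)) (P : set 'rV[R]_(1 + d)) :
  set 'rV[R]_(1 + d) := [set Y | exists2 X, P X & Y = X *m G^T].

Definition affG d (G : 'M[R]_(1 + d)) (gamma : 'rV[R]_(1 + d))
  (X : 'rV[R]_(1 + d)) : 'rV[R]_(1 + d) := X *m G^T + gamma.

Definition gmap d (G : 'M[R]_(1 + d)) (xi : 'rV[R]_d) : 'rV[R]_d :=
  piproj (sigma xi *m G).
Definition Smap d (gamma : 'rV[R]_(1 + d)) (xi : 'rV[R]_d) : R :=
  dotv gamma (sigma xi).

(* matrix of the differential dg(xi): row i is dg(xi) e_i, so that
   dg(xi) h = h *m Dg; the transpose tdg(xi) then acts as h |-> h *m Dg^T *)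
Definition Dgmx d (G : 'M[R]_(1 + d)) (xi : 'rV[R]_d) : 'M[R]_d :=
  lin1_mx ('d (gmap G) xi).

Definition gradS d (gamma : 'rV[R]_(1 + d)) (xi : 'rV[R]_d) : 'rV[R]_d :=
  \row_i ('d (Smap gamma) xi (delta_mx 0 i) : R).

Definition kappa d (G : 'M[R]_(1 + d)) (gamma : 'rV[R]_(1 + d))
  (x xi : 'rV[R]_d) : 'rV[R]_d * 'rV[R]_d :=
  ((x - gradS gamma xi) *m invmx (Dgmx G xi)^T, gmap G xi).

End Defs.

From HB Require Import structures.
From mathcomp Require Import all_boot all_order all_algebra.
From mathcomp Require Import all_classical all_reals all_analysis.
From mathcomp Require Import ring.
Import Order.TTheory GRing.Theory Num.Theory.
Import numFieldNormedType.Exports.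
Local Open Scope ring_scope.
Set Implicit Arguments. Unset Strict Implicit. Unset Printing Implicit Defensive.

(* sigma(xi) is a unit vector and its differential dsigma(xi) maps R^d onto
   the orthogonal complement of sigma(xi), so B - A is collinear to sigma(xi_A)
   as soon as <B - A, dsigma(xi_A) h> = 0 for every h.  Both <A, dsigma h> and
   <B, dsigma h> equal <x_A, h>: moving G and pi across the scalar product,
   <B, dsigma h> = <x_B, dg(xi_A) h> + dS(xi_A) h, and the definition of kappa
   says precisely that tdg(xi_A) x_B = x_A - dS(xi_A).  The invertibility of
   dg(xi_A) needed to invert tdg comes from sigma(xi_A) \notin G P_0. *)

Section AngularSpectrum.
Variable R : realType.

Section DotProduct.
Implicit Types (n : nat) (a : R).

Lemma dotvE n (u v : 'rV[R]_n) : dotv u v = \sum_i u 0 i * v 0 i.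
Proof. by rewrite /dotv mxE; apply: eq_bigr => i _; rewrite mxE. Qed.

Lemma dotvC n (u v : 'rV[R]_n) : dotv u v = dotv v u.
Proof. by rewrite !dotvE; apply: eq_bigr => i _; rewrite mulrC. Qed.

Lemma dotv0l n (u : 'rV[R]_n) : dotv 0 u = 0.
Proof. by rewrite /dotv mul0mx mxE. Qed.

Lemma dotv0r n (u : 'rV[R]_n) : dotv u 0 = 0.
Proof. by rewrite /dotv trmx0 mulmx0 mxE. Qed.

Lemma dotvDl n (u v w : 'rV[R]_n) : dotv (u + v) w = dotv u w + dotv v w.
Proof. by rewrite /dotv mulmxDl mxE. Qed.

Lemma dotvZl n a (u w : 'rV[R]_n) : dotv (a *: u) w = a * dotv u w.
Proof. by rewrite /dotv -scalemxAl mxE. Qed.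

Lemma dotvBl n (u v w : 'rV[R]_n) : dotv (u - v) w = dotv u w - dotv v w.
Proof. by rewrite dotvDl -scaleN1r dotvZl mulN1r. Qed.

Lemma dotv_row_mx n1 n2 (a b : 'rV[R]_n1) (u v : 'rV[R]_n2) :
  dotv (row_mx a u) (row_mx b v) = dotv a b + dotv u v.
Proof. by rewrite /dotv tr_row_mx mul_row_col mxE. Qed.

Lemma dotv_scalar_mxl a (u : 'rV[R]_1) : dotv a%:M u = a * u 0 0.
Proof. by rewrite dotvE big_ord1 mxE mulr1n. Qed.

Lemma dotv_mulmx_tr m n (u : 'rV[R]_n) (v : 'rV[R]_m) (M : 'M[R]_(m, n)) :
  dotv (u *m M^T) v = dotv u (v *m M).
Proof. by rewrite /dotv trmx_mul mulmxA. Qed.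

Lemma dotv_ge0 n (u : 'rV[R]_n) : 0 <= dotv u u.
Proof. by rewrite dotvE; apply: sumr_ge0 => i _; rewrite -expr2 sqr_ge0. Qed.

Lemma dotv_eq0 n (u : 'rV[R]_n) : dotv u u = 0 -> u = 0.
Proof.
rewrite dotvE => /eqP; rewrite psumr_eq0 => [/allP u0|i _]; last first.
  by rewrite -expr2 sqr_ge0.
apply/rowP => i; rewrite mxE; apply/eqP.
by have := u0 i (mem_index_enum i); rewrite mulf_eq0 orbb.
Qed.

Lemma enorm_sqr n (u : 'rV[R]_n) : enorm u ^+ 2 = dotv u u.
Proof. by rewrite sqr_sqrtr // dotv_ge0. Qed.

Lemma orthogonal_complement_collinear n (s v : 'rV[R]_n) :
  dotv s s = 1 -> (forall w, dotv s w = 0 -> dotv v w = 0) ->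
  v = dotv v s *: s.
Proof.
move=> s1 vperp; set c := dotv v s; set u := v - c *: s.
have su : dotv s u = 0 by rewrite dotvC dotvBl dotvZl s1 mulr1 subrr.
have uu : dotv u u = 0.
  by rewrite {1}/u dotvBl dotvZl su vperp // mulr0 subrr.
by apply/eqP; rewrite -subr_eq0; apply/eqP/dotv_eq0.
Qed.

Lemma lsubmx00 n (X : 'rV[R]_(1 + n)) : lsubmx X 0 0 = X 0 0.
Proof. by rewrite mxE; congr (X _ _); apply/val_inj. Qed.

End DotProduct.

Section Differentials.

Lemma is_diff_sum (V W : normedModType R) n (f df : 'I_n -> V -> W) x :
  (forall i, is_diff x (f i) (df i)) -> is_diff x (\sum_i f i) (\sum_i df i).
Proof.
move=> fdf; elim/big_ind2 : _ => // [|g dg h dh gdg hdh].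
  exact: is_diff_cst.
exact: is_diffD.
Qed.

Lemma is_diff_linear m n (W : normedModType R) (f : 'M[R]_(m, n) -> W) x :
  linear f -> is_diff x f f.
Proof.
move=> flin.
pose fL : {linear 'M[R]_(m, n) -> W} :=
  HB.pack f (GRing.isLinear.Build _ _ _ _ f flin).
have fE : f = \sum_i \sum_j (fun X : 'M[R]_(m, n) => X i j *: f (delta_mx i j)).
  apply/funext => X; rewrite {1}(matrix_sum_delta X) !fct_sumE.
  rewrite -[f]/(fL : _ -> _) linear_sum; apply: eq_bigr => i _.
  by rewrite fct_sumE linear_sum; apply: eq_bigr => j _; rewrite linearZ.
have fdiff y : differentiable f y.
  rewrite fE; apply: differentiable_sum => i; apply: differentiable_sum => j.
  exact/differentiableZl/differentiable_coord.
have fcont : continuous fL := fun y => differentiable_continuous (fdiff y).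
exact: DiffDef (fdiff x) (diff_lin _ fcont).
Qed.

Lemma is_diff_dotv_self n (x : 'rV[R]_n) :
  is_diff x (fun u : 'rV[R]_n => dotv u u) (fun h => 2 * dotv x h).
Proof.
pose c i (u : 'rV[R]_n) := u 0 i.
have clin i : linear (c i) by move=> a u v; rewrite /c !mxE.
have -> : (fun u : 'rV[R]_n => dotv u u) = \sum_i (c i * c i).
  by apply/funext => u; rewrite dotvE fct_sumE.
apply: is_diff_eq.
  by apply: is_diff_sum => i; apply: is_diffM; apply: is_diff_linear.
apply/funext => h; rewrite fct_sumE dotvE mulr_sumr; apply: eq_bigr => i _.
by rewrite /= /c mulr2n mulrDl mul1r.
Qed.

End Differentials.

Section SphereChart.
Variable n : nat.
Implicit Types (x xi h : 'rV[R]_n) (w : 'rV[R]_(1 + n)).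

Definition sigma0 xi : R := Num.sqrt (1 - dotv xi xi).

Definition dsigma xi h : 'rV[R]_(1 + n) :=
  row_mx (- dotv xi h / sigma0 xi)%:M h.

Lemma sigmaE xi : sigma xi = row_mx (sigma0 xi)%:M xi.
Proof. by rewrite /sigma enorm_sqr. Qed.

Lemma sigma0_gt0 xi : dotv xi xi < 1 -> 0 < sigma0 xi.
Proof. by move=> xi1; rewrite sqrtr_gt0 subr_gt0. Qed.

Lemma dotv_sigma xi : dotv xi xi <= 1 -> dotv (sigma xi) (sigma xi) = 1.
Proof.
move=> xi1; rewrite sigmaE dotv_row_mx dotv_scalar_mxl mxE mulr1n -expr2.
by rewrite sqr_sqrtr ?subrK // subr_ge0.
Qed.

Lemma dotv_sigma_dsigma xi h :
  dotv xi xi < 1 -> dotv (sigma xi) (dsigma xi h) = 0.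
Proof.
move=> /sigma0_gt0 /gt_eqF /negbT q0.
by rewrite sigmaE dotv_row_mx dotv_scalar_mxl mxE mulr1n mulrC divfK // addNr.
Qed.

Lemma dsigma_piproj xi w :
  dotv xi xi < 1 -> dotv (sigma xi) w = 0 -> dsigma xi (piproj w) = w.
Proof.
move=> /sigma0_gt0 /gt_eqF /negbT q0.
rewrite -{1 3}(hsubmxK w) sigmaE dotv_row_mx => sw0.
congr row_mx; apply/rowP => i; rewrite ord1 !mxE mulr1n.
apply: (mulfI q0); rewrite mulrCA divff // mulr1.
by apply/eqP; rewrite eq_sym -addr_eq0 -[X in _ == X]sw0 dotv_scalar_mxl mxE.
Qed.

Lemma piproj_dsigma xi h : piproj (dsigma xi h) = h.
Proof. exact: row_mxKr. Qed.

Lemma is_diff_sigma0 x :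
  dotv x x < 1 -> is_diff x sigma0 (fun h => - dotv x h / sigma0 x).
Proof.
move=> x1; pose phi (u : 'rV[R]_n) : R := 1 - dotv u u.
have phi0 : 0 < phi x by rewrite subr_gt0.
have dphi : is_diff x phi (0 - fun h => 2 * dotv x h).
  exact (is_diffB (is_diff_cst (1 : R^o) x) (is_diff_dotv_self x)).
have dsqrt : is_diff (phi x) Num.sqrt ( *:%R^~ (2 * Num.sqrt (phi x))^-1).
  have sqrt_derivable : derivable Num.sqrt (phi x) 1.
    by have [] := is_derive1_sqrt phi0.
  apply: DiffDef; first exact/derivable1_diffP.
  by rewrite deriv1E // derive1E derive_sqrt.
apply: is_diff_eq (is_diff_comp dphi dsqrt) _; apply/funext => h /=.
have q0 : Num.sqrt (phi x) != 0 by rewrite gt_eqF // sqrtr_gt0.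
rewrite /sigma0 -/(phi x).
by rewrite -[LHS]/((0 - 2 * dotv x h) * (2 * Num.sqrt (phi x))^-1); field.
Qed.

Lemma tpi_is_linear : linear (@tpi R n).
Proof. by move=> a u v; rewrite /tpi scale_row_mx add_row_mx scaler0 addr0. Qed.

Lemma is_diff_sigma x : dotv x x < 1 -> is_diff x (@sigma R n) (dsigma x).
Proof.
move=> /is_diff_sigma0 dq.
pose e0 : 'rV[R]_(1 + n) := row_mx 1%:M 0.
have row_mxE (a : R) u : row_mx a%:M u = a *: e0 + tpi u.
  by rewrite /e0 /tpi scale_row_mx add_row_mx scaler0 addr0 add0r scalemx1.
have dqe0 : is_diff x (fun u => sigma0 u *: e0)
                     (fun h => - dotv x h / sigma0 x *: e0).
  apply: DiffDef; first exact: differentiableZl.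
  by rewrite diffZl // diff_val.
have -> : @sigma R n = (fun u => sigma0 u *: e0) + @tpi R n.
  by apply/funext => u; rewrite sigmaE row_mxE.
apply: is_diff_eq (is_diffD dqe0 (is_diff_linear x tpi_is_linear)) _.
by apply/funext => h; rewrite /dsigma row_mxE.
Qed.

End SphereChart.

Section CanonicalTransformation.
Variables (d : nat) (G : 'M[R]_(1 + d)) (gamma : 'rV[R]_(1 + d)).
Implicit Types (x xi h : 'rV[R]_d) (w : 'rV[R]_(1 + d)).

Lemma dotv_tpi x w : dotv (tpi x) w = dotv x (piproj w).
Proof. by rewrite -{1}(hsubmxK w) dotv_row_mx dotv0l add0r. Qed.

Lemma is_diff_gmap xi :
  dotv xi xi < 1 -> is_diff xi (gmap G) (fun h => piproj (dsigma xi h *m G)).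
Proof.
move=> /is_diff_sigma dsig.
have lin : linear (fun X : 'rV[R]_(1 + d) => piproj (X *m G)).
  by move=> a u v; rewrite /piproj mulmxDl -scalemxAl linearP.
exact: is_diff_comp dsig (is_diff_linear _ lin).
Qed.

Lemma is_diff_Smap xi :
  dotv xi xi < 1 -> is_diff xi (Smap gamma) (fun h => dotv gamma (dsigma xi h)).
Proof.
move=> /is_diff_sigma dsig.
have lin : linear (dotv gamma).
  by move=> a u v; rewrite (dotvC gamma) dotvDl dotvZl !(dotvC gamma).
exact: is_diff_comp dsig (is_diff_linear _ lin).
Qed.

Lemma mulmx_Dgmx xi h :
  dotv xi xi < 1 -> h *m Dgmx G xi = piproj (dsigma xi h *m G).
Proof. by move=> /is_diff_gmap dg; rewrite mul_rV_lin1 /= diff_val. Qed.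

Lemma dotv_gradS xi h :
  dotv xi xi < 1 -> dotv (gradS gamma xi) h = dotv gamma (dsigma xi h).
Proof.
move=> /is_diff_Smap dS.
have -> : dotv gamma (dsigma xi h) = 'd (Smap gamma) xi h by rewrite diff_val.
rewrite dotvE [in RHS](row_sum_delta h) linear_sum.
by apply: eq_bigr => i _; rewrite linearZ /= mxE mulrC.
Qed.

(* If dg(xi) h = 0 then w := tG dsigma(xi) h is a multiple of e_0, and
   0 = <sigma(xi), dsigma(xi) h> = <X, w> = X_0 w_0 with sigma(xi) = G X. *)
Lemma Dgmx_unit xi :
  G \in unitmx -> dotv xi xi < 1 -> ~ Gimage G (@P0 R d) (sigma xi) ->
  Dgmx G xi \in unitmx.
Proof.
move=> Gu xi1 notim; rewrite -row_free_unit; apply: inj_row_free => h.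
rewrite mulmx_Dgmx // /piproj => w0.
set w := dsigma xi h *m G in w0.
set X := sigma xi *m invmx G^T.
have sigmaX : sigma xi = X *m G^T by rewrite mulmxKV // unitmx_tr.
have X00 : X 0 0 != 0 by apply/eqP => X00; apply: notim; exists X.
have Xw : dotv X w = 0 by rewrite /w -dotv_mulmx_tr -sigmaX dotv_sigma_dsigma.
have lw0 : lsubmx w 0 0 = 0.
  move: Xw; rewrite -[w in dotv _ w]hsubmxK w0 -[X in dotv X _]hsubmxK.
  rewrite dotv_row_mx dotv0r addr0 dotvE big_ord1 lsubmx00 => /eqP.
  by rewrite mulf_eq0 (negPf X00) => /eqP.
have {lw0}w_eq0 : w = 0.
  rewrite -[w]hsubmxK w0 -row_mx0; congr row_mx.
  by apply/rowP => j; rewrite ord1 lw0 mxE.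
rewrite -(piproj_dsigma xi h) -(mulmxK Gu (dsigma xi h)) -/w w_eq0 mul0mx.
by rewrite /piproj linear0.
Qed.

Lemma dotv_kappa_dsigma x xi h :
  Dgmx G xi \in unitmx -> dotv xi xi < 1 ->
  dotv (affG G gamma (tpi (kappa G gamma x xi).1)) (dsigma xi h) = dotv x h.
Proof.
move=> Du xi1; rewrite /affG dotvDl dotv_mulmx_tr dotv_tpi -mulmx_Dgmx //.
rewrite -dotv_mulmx_tr /kappa /= mulmxKV ?unitmx_tr //.
by rewrite dotvBl dotv_gradS // subrK.
Qed.

End CanonicalTransformation.

End AngularSpectrum.

Theorem lemma5p8 (R : realType) (d : nat) (G : 'M[R]_(1 + d))
  (gamma : 'rV[R]_(1 + d)) (xA xiA : 'rV[R]_d) :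
  (0 < d)%N ->
  G \in unitmx ->
  enorm xiA < 1 ->
  ~ Gimage G (@P0 R d) (sigma xiA) ->
  let xB := (kappa G gamma xA xiA).1 in
  let A := tpi xA in
  let B := affG G gamma (tpi xB) in
  exists c : R, B - A = c *: sigma xiA.
Proof.
move=> _ Gu xiA_lt1 notim xB A B.
have xi1 : dotv xiA xiA < 1 by rewrite -enorm_sqr expr_lt1 // sqrtr_ge0.
exists (dotv (B - A) (sigma xiA)).
apply: orthogonal_complement_collinear; first exact/dotv_sigma/ltW.
move=> w /(dsigma_piproj xi1) <-.
by rewrite dotvBl dotv_kappa_dsigma ?Dgmx_unit // dotv_tpi piproj_dsigma subrr.
Qed.
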